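(* Let $(G,\cdot,\curlywedge,\xi,\delta)$ satisfy the standing assumptions below. For every subset $H\subseteq G$, every natural number $n>1$ and every $z\in G$, we have $z\in F_\xi^{\,n}(H)$ if and only if there exist $x_i,y_i,t_i\in G^*$ and $u_i,v_i\in G$ ($1\le i\le 2^n-1$) such that: (a) $u_1\downarrow v_1$ and $(u_1\curlywedge v_1)x_1\boxdot y_1\leqslant zt_1$; (b) for every $i$ with $1\le i\le 2^{n-1}-1$: $u_{2i}\downarrow v_{2i}$, $(u_{2i}\curlywedge v_{2i})x_{2i}\boxdot y_{2i}\leqslant u_it_{2i}$, $u_{2i+1}\downarrow v_{2i+1}$ and $(u_{2i+1}\curlywedge v_{2i+1})x_{2i+1}\boxdot y_{2i+1}\leqslant v_ix_it_{2i+1}$; (c) for every $i$ with $2^{n-1}\le i\le 2^n-1$: $u_i\in H$ and $v_ix_i\in H$.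
   Context: Standing assumptions: $(G,\cdot)$ is a semigroup, $(G,\curlywedge)$ a semilattice on $G$, $\xi,\delta\subseteq G\times G$. Write $x\leqslant y$ iff $x\curlywedge y=x$ (semilattice order $\zeta$), $x\downarrow y$ iff $(x,y)\in\xi$, $x\vdash y$ iff $(x,y)\in\delta$. Assume $\xi$ is left regular ($(u,v)\in\xi\Rightarrow(xu,xv)\in\xi$), $\zeta\subseteq\xi$, $\delta$ is a left ideal ($(x,y)\in\delta\Rightarrow(ux,y)\in\delta$), and for all $x,y,z,u,v\in G$: $x(y\curlywedge z)=xy\curlywedge xz$; $x\leqslant y\wedge u\leqslant v\wedge y\downarrow v\Rightarrow u\downarrow x$; $x\downarrow y\Rightarrow(x\curlywedge y)u=xu\curlywedge yu$. $G^*=G\cup\{e\}$ is $(G,\cdot)$ with a new identity $e$ adjoined, with conventions $e\leqslant e$, $e\vdash e$, $x\vdash e$ for all $x\in G$. $a\boxdot b\leqslant c$ abbreviates $a\vdash b\wedge ab\leqslant c$. For $H\subseteq G$, $F_\xi(H)=\{z\in G:\exists u,v\in G,\ \exists x,y,t\in G^*$ with $u\downarrow v$, $(u\curlywedge v)x\boxdot y\leqslant zt$, $u\in H$, $vx\in H\}$; $F_\xi^{\,0}(H)=H$ and $F_\xi^{\,n}(H)=F_\xi(F_\xi^{\,n-1}(H))$ for $n\ge1$. *)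

From Stdlib Require Import Arith.

Set Implicit Arguments.

Section Defs.
Variable G : Type.
Variables (mul meet : G -> G -> G) (xi delta : G -> G -> Prop).

Definition sle (x y : G) : Prop := meet x y = x.

Record standing : Prop := {
  mul_assoc : forall x y z, mul x (mul y z) = mul (mul x y) z;
  meet_assoc : forall x y z, meet x (meet y z) = meet (meet x y) z;
  meet_comm : forall x y, meet x y = meet y x;
  meet_idem : forall x, meet x x = x;
  xi_left_regular : forall x u v, xi u v -> xi (mul x u) (mul x v);
  zeta_sub_xi : forall x y, sle x y -> xi x y;
  delta_left_ideal : forall u x y, delta x y -> delta (mul u x) y;
  mul_meet_distr : forall x y z, mul x (meet y z) = meet (mul x y) (mul x z);
  sle_xi_swap : forall x y u v, sle x y -> sle u v -> xi y v -> xi u x;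
  xi_meet_distr_r : forall x y u, xi x y -> mul (meet x y) u = meet (mul x u) (mul y u)
}.

(* G^* = G ∪ {e}, modelled as option G with None = e *)
Definition mulS (a b : option G) : option G :=
  match a, b with
  | None, _ => b
  | _, None => a
  | Some x, Some y => Some (mul x y)
  end.

Definition leS (a b : option G) : Prop :=
  match a, b with
  | None, None => True
  | Some x, Some y => sle x y
  | _, _ => False
  end.

Definition vdashS (a b : option G) : Prop :=
  match a, b with
  | _, None => True
  | Some x, Some y => delta x y
  | None, Some _ => False
  end.

(* a ⊡ b <= c  :=  a |- b /\ ab <= c *)
Definition boxle (a b c : option G) : Prop := vdashS a b /\ leS (mulS a b) c.

Definition inH (H : G -> Prop) (a : option G) : Prop :=
  match a with Some g => H g | None => False end.

Definition Fxi (H : G -> Prop) (z : G) : Prop :=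
  exists (u v : G) (x y t : option G),
    xi u v /\
    boxle (mulS (Some (meet u v)) x) y (mulS (Some z) t) /\
    H u /\ inH H (mulS (Some v) x).

Fixpoint Fxin (n : nat) (H : G -> Prop) : G -> Prop :=
  match n with
  | 0 => H
  | S m => Fxi (Fxin m H)
  end.

End Defs.

(** The iterate [F^n(H)] unfolds into a complete binary tree of witnesses of
    depth [n - 1], indexed heap-style: node [i] has children [2i] and [2i+1].
    Each node carries the data [u, v, x, y, t] of one application of [F]; the
    targets of the children of node [i] are [u_i] and [v_i x_i], and the
    leaves must land in [H].  Since [F^(n+1)(H) = F^n(F(H))], going one level
    deeper amounts to replacing every leaf condition "in [F(H)]" by a fresh
    pair of children whose own leaf conditions are "in [H]". *)

From Stdlib Require Import Arith Lia Classical IndefiniteDescription.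

Set Implicit Arguments.

Lemma guarded_choice (A B : Type) (b0 : B) (P : A -> Prop) (Q : A -> B -> Prop) :
  (forall a, P a -> exists b, Q a b) -> exists f : A -> B, forall a, P a -> Q a (f a).
Proof.
  intro HQ.
  apply (functional_choice (fun a b => P a -> Q a b)).
  intro a; destruct (classic (P a)) as [Pa | nPa].
  - destruct (HQ a Pa) as [b Qb]; exists b; auto.
  - exists b0; tauto.
Qed.

Lemma pow2_pos_double (d : nat) : 0 < 2 ^ d /\ 2 ^ S d = 2 * 2 ^ d.
Proof.
  split; [apply Nat.neq_0_lt_0, Nat.pow_nonzero; lia | apply Nat.pow_succ_r'].
Qed.

Section WitnessTree.

Variable G : Type.
Variables (mul meet : G -> G -> G) (xi delta : G -> G -> Prop).

Record node := Node { nu : G; nv : G; nx : option G; ny : option G; nt : option G }.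

Definition rhs (w : node) : G :=
  match nx w with None => nv w | Some x => mul (nv w) x end.

Lemma mulS_rhs (w : node) : mulS mul (Some (nv w)) (nx w) = Some (rhs w).
Proof. unfold rhs; destruct (nx w); reflexivity. Qed.

Definition step (g : G) (w : node) : Prop :=
  xi (nu w) (nv w) /\
  boxle mul meet delta (mulS mul (Some (meet (nu w) (nv w))) (nx w)) (ny w)
        (mulS mul (Some g) (nt w)).

Definition leaf (H : G -> Prop) (w : node) : Prop := H (nu w) /\ H (rhs w).

Lemma Fxi_node (H : G -> Prop) (g : G) :
  Fxi mul meet xi delta H g <-> exists w, step g w /\ leaf H w.
Proof.
  split.
  - intros (u & v & x & y & t & Huv & Hbox & Hu & Hvx).
    pose proof (mulS_rhs (Node u v x y t)) as Hrhs; cbn [nv nx] in Hrhs.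
    rewrite Hrhs in Hvx.
    exists (Node u v x y t); exact (conj (conj Huv Hbox) (conj Hu Hvx)).
  - intros ([u v x y t] & [Huv Hbox] & [Hu Hvx]).
    pose proof (mulS_rhs (Node u v x y t)) as Hrhs; cbn [nv nx] in Hrhs.
    exists u, v, x, y, t; rewrite Hrhs; exact (conj Huv (conj Hbox (conj Hu Hvx))).
Qed.

Definition tree_labelling (H : G -> Prop) (d : nat) (z : G) (w : nat -> node) : Prop :=
  step z (w 1) /\
  (forall i, 1 <= i < 2 ^ d ->
     step (nu (w i)) (w (2 * i)) /\ step (rhs (w i)) (w (2 * i + 1))) /\
  (forall i, 2 ^ d <= i < 2 ^ S d -> leaf H (w i)).

Lemma tree_labelling_0 (H : G -> Prop) (z : G) :
  Fxi mul meet xi delta H z <-> exists w, tree_labelling H 0 z w.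
Proof.
  rewrite Fxi_node; split.
  - intros (w0 & Hstep & Hleaf).
    exists (fun _ => w0); split; [exact Hstep | split].
    + simpl; lia.
    + intros; exact Hleaf.
  - intros (w & Hroot & _ & Hleaves).
    exists (w 1); split; [exact Hroot | apply Hleaves; simpl; lia].
Qed.

Lemma tree_labelling_shrink (H : G -> Prop) (d : nat) (z : G) (w : nat -> node) :
  tree_labelling H (S d) z w -> tree_labelling (Fxi mul meet xi delta H) d z w.
Proof.
  destruct (pow2_pos_double d) as [Hpos Hpow].
  destruct (pow2_pos_double (S d)) as [_ Hpow'].
  intros (Hroot & Hinner & Hleaves).
  split; [exact Hroot | split].
  - intros i Hi; apply Hinner; lia.
  - intros i Hi.
    destruct (Hinner i ltac:(lia)) as [Hl Hr].
    split; apply Fxi_node.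
    + exists (w (2 * i)); split; [exact Hl | apply Hleaves; lia].
    + exists (w (2 * i + 1)); split; [exact Hr | apply Hleaves; lia].
Qed.

Definition child_target (w : nat -> node) (j : nat) : G :=
  if Nat.odd j then rhs (w (Nat.div2 j)) else nu (w (Nat.div2 j)).

Lemma child_target_even (w : nat -> node) (i : nat) :
  child_target w (2 * i) = nu (w i).
Proof. unfold child_target; rewrite Nat.odd_even, Nat.div2_double; reflexivity. Qed.

Lemma child_target_odd (w : nat -> node) (i : nat) :
  child_target w (2 * i + 1) = rhs (w i).
Proof.
  unfold child_target; rewrite Nat.odd_odd, Nat.add_1_r, Nat.div2_succ_double.
  reflexivity.
Qed.

Lemma tree_labelling_grow (H : G -> Prop) (d : nat) (z : G) (w : nat -> node) :
  tree_labelling (Fxi mul meet xi delta H) d z w ->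
  exists w', tree_labelling H (S d) z w'.
Proof.
  destruct (pow2_pos_double d) as [Hpos Hpow].
  destruct (pow2_pos_double (S d)) as [_ Hpow'].
  intros (Hroot & Hinner & Hleaves).
  set (N := 2 ^ S d) in *.
  assert (Hnew : forall j, N <= j < 2 ^ S (S d) ->
                   exists c, step (child_target w j) c /\ leaf H c).
  { intros j Hj.
    assert (Hi : 2 ^ d <= Nat.div2 j < N)
      by (pose proof (Nat.div2_odd j); destruct (Nat.odd j); simpl in *; lia).
    destruct (Hleaves _ Hi) as [Hu Hv].
    apply Fxi_node; unfold child_target; destruct (Nat.odd j); assumption. }
  destruct (guarded_choice (w 0) _ _ Hnew) as [c Hc].
  exists (fun j => if j <? N then w j else c j).
  assert (Hold : forall j, j < N -> (j <? N) = true) by (intros; apply Nat.ltb_lt; lia).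
  assert (Hfresh : forall j, N <= j -> (j <? N) = false) by (intros; apply Nat.ltb_ge; lia).
  split; [|split].
  - rewrite Hold by lia; exact Hroot.
  - intros i Hi; rewrite (Hold i) by lia.
    destruct (Nat.lt_ge_cases i (2 ^ d)) as [Hlt | Hge].
    + rewrite !Hold by lia; apply Hinner; lia.
    + rewrite !Hfresh by lia.
      rewrite <- child_target_even, <- child_target_odd.
      split; apply Hc; lia.
  - intros j Hj; rewrite Hfresh by lia; apply Hc; lia.
Qed.

Lemma Fxin_succ_inner (n : nat) (H : G -> Prop) :
  Fxin mul meet xi delta (S n) H = Fxin mul meet xi delta n (Fxi mul meet xi delta H).
Proof. induction n; simpl in *; [reflexivity | now rewrite IHn]. Qed.

Lemma Fxin_tree_labelling (d : nat) (H : G -> Prop) (z : G) :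
  Fxin mul meet xi delta (S d) H z <-> exists w, tree_labelling H d z w.
Proof.
  revert H; induction d as [|d IH]; intro H.
  - apply tree_labelling_0.
  - rewrite Fxin_succ_inner, IH; split.
    + intros [w Hw]; exact (tree_labelling_grow Hw).
    + intros [w Hw]; exists w; exact (tree_labelling_shrink Hw).
Qed.

End WitnessTree.

Theorem proposition6 (G : Type) (mul meet : G -> G -> G) (xi delta : G -> G -> Prop)
  (Hst : standing mul meet xi delta)
  (H : G -> Prop) (n : nat) (z : G) :
  1 < n ->
  (Fxin mul meet xi delta n H z <->
   exists (x y t : nat -> option G) (u v : nat -> G),
     (* (a) *)
     (xi (u 1) (v 1) /\
      boxle mul meet delta (mulS mul (Some (meet (u 1) (v 1))) (x 1)) (y 1)
            (mulS mul (Some z) (t 1))) /\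
     (* (b) *)
     (forall i, 1 <= i <= 2 ^ (n - 1) - 1 ->
        xi (u (2 * i)) (v (2 * i)) /\
        boxle mul meet delta (mulS mul (Some (meet (u (2 * i)) (v (2 * i)))) (x (2 * i)))
              (y (2 * i)) (mulS mul (Some (u i)) (t (2 * i))) /\
        xi (u (2 * i + 1)) (v (2 * i + 1)) /\
        boxle mul meet delta
              (mulS mul (Some (meet (u (2 * i + 1)) (v (2 * i + 1)))) (x (2 * i + 1)))
              (y (2 * i + 1))
              (mulS mul (mulS mul (Some (v i)) (x i)) (t (2 * i + 1)))) /\
     (* (c) *)
     (forall i, 2 ^ (n - 1) <= i <= 2 ^ n - 1 ->
        H (u i) /\ inH H (mulS mul (Some (v i)) (x i)))).
Proof.
  intros Hn; destruct n as [|d]; [lia|].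
  rewrite Fxin_tree_labelling, Nat.sub_succ, Nat.sub_0_r.
  destruct (pow2_pos_double d) as [Hpos Hpow].
  split.
  - intros (w & Hroot & Hinner & Hleaves).
    exists (fun i => nx (w i)), (fun i => ny (w i)), (fun i => nt (w i)),
           (fun i => nu (w i)), (fun i => nv (w i)).
    split; [exact Hroot | split].
    + intros i Hi; destruct (Hinner i ltac:(lia)) as [[? ?] [? ?]].
      rewrite mulS_rhs; tauto.
    + intros i Hi; rewrite mulS_rhs; apply Hleaves; lia.
  - intros (x & y & t & u & v & Hroot & Hinner & Hleaves).
    set (w := fun i => Node (u i) (v i) (x i) (y i) (t i)).
    assert (Hrhs : forall i, mulS mul (Some (v i)) (x i) = Some (rhs mul (w i)))
      by (intro i; apply (mulS_rhs mul (w i))).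
    exists w; split; [exact Hroot | split].
    + intros i Hi; destruct (Hinner i ltac:(lia)) as (? & ? & ? & ?).
      unfold step; rewrite <- Hrhs; simpl; tauto.
    + intros i Hi; destruct (Hleaves i ltac:(lia)) as [Hu Hv].
      rewrite Hrhs in Hv; split; assumption.
Qed.
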